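(* Let $\mathcal{G}=(V,\mathcal{E})$ be a plurigraph with $V=[n]$, and let $(V,E)\in\mathcal{E}$ be a contraction-ready pluriedge with contraction-ready composition $(B_1,\dots,B_\ell)$ and with $k\ge 0$ such that $B_i$ is a singleton if and only if $i>k$. Let $r_i=|B_i|-1$. Then $$Y_{\mathcal{G}}=Y_{\mathcal{G}\setminus(V,E)}-Y_{\mathcal{G}/(V,E)}\uparrow^{(r_1,r_2,\dots,r_k)}.$$
   Context: Let $\mathbb{P}=\{1,2,\dots\}$ and work in the ring of formal power series over a field $\mathbb{K}$ of characteristic zero in noncommuting variables $y_1,y_2,\dots$. A graph is a pair $(V,E)$ with $E$ a finite multiset of unordered pairs $uv$ of (not necessarily distinct) elements of $V$ (loops and multiple edges allowed). A plurigraph is a pair $\mathcal{G}=(V,\mathcal{E})$ with $V$ a finite set and $\mathcal{E}$ a finite multiset of graphs $(V,E)$ with vertex set $V$ and $E\neq\emptyset$ (pluriedges). A map $f:V\to\mathbb{P}$ is a proper coloring of $\mathcal{G}$ if for every pluriedge $(V,E)\in\mathcal{E}$ there is an edge $uv\in E$ with $f(u)\neq f(v)$. For $V=[n]$, the chromatic nc-symmetric function is $Y_{\mathcal{G}}=\sum_f y_{f(1)}y_{f(2)}\cdots y_{f(n)}$, summed over proper colorings $f$. Deletion: $\mathcal{G}\setminus(V,E)=(V,\mathcal{E}')$ where $\mathcal{E}'$ is $\mathcal{E}$ with one copy of $(V,E)$ removed. For disjoint $A,B\subseteq[n]$ write $A>B$ if $a>b$ for all $a\in A,b\in B$. A pluriedge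 $(V,E)$ is contraction-ready if the connected components of the graph $(V,E)$ can be ordered as $B_1,\dots,B_\ell$ with $B_i>B_j$ whenever $i<j$ and such that there is $k\ge0$ with $B_i$ a singleton iff $i>k$; $(B_1,\dots,B_\ell)$ is the contraction-ready composition. Contraction: $\mathcal{G}/(V,E)$ is the plurigraph with vertex set $[\ell]$, where all vertices of $B_i$ are identified to the single vertex $\ell-i+1$ (call this map $\phi:[n]\to[\ell]$), and whose pluriedge multiset is $\{([\ell],\{\phi(u)\phi(v): uv\in E'\}) : (V,E')\in\mathcal{E}'\}$ (edges taken as multisets; loops may arise). Induction: for nonnegative integers $r_1,\dots,r_k$ and a monomial $y_{i_1}\cdots y_{i_m}$ with $k\le m$, set $y_{i_1}\cdots y_{i_m}\uparrow^{(r_1,\dots,r_k)}=y_{i_1}\cdots y_{i_{m-k}}\,y_{i_{m-k+1}}^{1+r_k}\cdots y_{i_{m-1}}^{1+r_2}\,y_{i_m}^{1+r_1}$, extended linearly (termwise) to homogeneous series of degree $m$. *)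

From HB Require Import structures.
From mathcomp Require Import all_boot all_order all_algebra.
Set Implicit Arguments. Unset Strict Implicit. Unset Printing Implicit Defensive.
Import GRing.Theory.
Local Open Scope ring_scope.

(* Conventions:
   - Vertices of a plurigraph on [n] are encoded by the naturals 0..n-1
     (vertex j+1 of the paper is j here).
   - A graph (V,E) is its finite multiset E of unordered pairs, encoded as a
     list of ordered pairs (nat * nat); all notions used are symmetric in the
     two endpoints.  A pluriedge is such a nonempty list, and a plurigraph on
     [n] is the number n together with a list (multiset) of pluriedges.
   - A formal power series in noncommuting variables y_1, y_2, ... over K is
     encoded by its coefficient function on words: the word
     [:: i_1; ...; i_m] (with all i_j > 0) stands for y_{i_1} ... y_{i_m}.  *)

Definition edge := (nat * nat)%type.
Definition pluriedge := seq edge.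
Definition plurigraph := seq pluriedge.

Definition wf_plurigraph (n : nat) (pe : plurigraph) : bool :=
  all (fun E => (E != [::]) && all (fun uv => (uv.1 < n)%N && (uv.2 < n)%N) E) pe.

Definition proper_coloring (pe : plurigraph) (w : seq nat) : bool :=
  all (fun E => has (fun uv => nth 0%N w uv.1 != nth 0%N w uv.2) E) pe.

(* coefficient of the monomial y_{w_1}...y_{w_m} in Y_G, G = ([n], pe) *)
Definition Ychrom (K : fieldType) (n : nat) (pe : plurigraph) (w : seq nat) : K :=
  ((size w == n) && all (fun c => (0 < c)%N) w && proper_coloring pe w)%:R.

Definition delete (pe : plurigraph) (E : pluriedge) : plurigraph := rem E pe.

Definition adjE (n : nat) (E : pluriedge) : rel 'I_n :=
  fun u v => ((val u, val v) \in E) || ((val v, val u) \in E).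

Definition component (n : nat) (E : pluriedge) (x : 'I_n) : {set 'I_n} :=
  [set y | connect (adjE E) x y].

(* Bs is an enumeration (without repetition) of the connected components of
   ([n],E), ordered so that B_i > B_j for i < j, and with exactly the blocks
   of (0-based) index >= k being singletons. *)
Definition contraction_ready_composition (n : nat) (E : pluriedge)
    (Bs : seq {set 'I_n}) (k : nat) : Prop :=
  [/\ uniq Bs,
      (forall X, X \in Bs <-> exists x, X = component E x),
      (forall i j, (i < j)%N -> (j < size Bs)%N ->
         forall a b : 'I_n, a \in nth set0 Bs i -> b \in nth set0 Bs j ->
         (val b < val a)%N),
      (k <= size Bs)%N &
      (forall i, (i < size Bs)%N -> (#|nth set0 Bs i| == 1%N) = (k <= i)%N)].

(* the map phi : [n] -> [l] identifying B_i (1-based) to l - i + 1;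
   0-based: block index i goes to l - 1 - i *)
Definition in_block (n : nat) (v : nat) (B : {set 'I_n}) : bool :=
  [exists x in B, val x == v].

Definition phi (n : nat) (Bs : seq {set 'I_n}) (v : nat) : nat :=
  ((size Bs).-1 - find (in_block v) Bs)%N.

Definition contract (n : nat) (pe : plurigraph) (E : pluriedge)
    (Bs : seq {set 'I_n}) : plurigraph :=
  [seq [seq (phi Bs uv.1, phi Bs uv.2) | uv <- E'] | E' <- rem E pe].

(* Induction on monomials: y_{i_1}..y_{i_m} ^(r_1..r_k) =
   y_{i_1}..y_{i_{m-k}} y_{i_{m-k+1}}^{1+r_k} ... y_{i_m}^{1+r_1} *)
Definition up_word (r : seq nat) (w : seq nat) : seq nat :=
  take (size w - size r) w ++
  flatten [seq nseq p.2.+1 p.1 | p <- zip (drop (size w - size r) w) (rev r)].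

Fixpoint words (m : nat) (s : seq nat) : seq (seq nat) :=
  if m is m'.+1 then [seq x :: w | x <- s, w <- words m' s] else [:: [::]].

(* termwise-linear extension of the induction to a homogeneous series S of
   degree m: the coefficient of u in S^(r) is the sum of the coefficients of
   S at all words w of length m with w^(r) = u (any such w only uses letters
   of u, so it suffices to range over words on the letters of u). *)
Definition up_series (K : fieldType) (m : nat) (r : seq nat)
    (S : seq nat -> K) (u : seq nat) : K :=
  \sum_(w <- words m (undup u) | up_word r w == u) S w.

From HB Require Import structures.
From mathcomp Require Import all_boot all_order all_algebra zify.
Import GRing.Theory.

Set Implicit Arguments.
Unset Strict Implicit.
Unset Printing Implicit Defensive.

(* A coloring u of [n] is proper for G exactly when it is proper for G \ (V,E) and
   separates some edge of (V,E), so it suffices to show that the induced series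
   counts the colorings that are proper for G \ (V,E) and constant on every edge of
   (V,E).  These are the colorings constant on the components B_i, i.e. the
   pullbacks g o phi of colorings g of [l], and g o phi is proper for G \ (V,E) iff
   g is proper for G/(V,E).  Since phi is weakly increasing with fibre B_i over
   l - i + 1, the word of g o phi is the word of g with its letter in position
   l - i + 1 repeated |B_i| times: this is the induced word of g with exponents
   (r_1, ..., r_k), the blocks B_i with i > k being singletons.  All coefficients
   involved are 0 or 1, so the characteristic plays no role. *)

Definition stretch {T : Type} (e : seq nat) (w : seq T) : seq T :=
  flatten [seq nseq p.2.+1 p.1 | p <- zip w e].

Section Stretch.

Variable T : Type.
Implicit Types (e : seq nat) (w : seq T).

Lemma stretch_cons c e x w :
  stretch (c :: e) (x :: w) = nseq c.+1 x ++ stretch e w.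
Proof. by []. Qed.

Lemma stretch_nseq0 m w : size w = m -> stretch (nseq m 0) w = w.
Proof. by move<-; elim: w => //= x w IH; rewrite stretch_cons IH. Qed.

Lemma stretch_cat e1 e2 w1 w2 : size w1 = size e1 ->
  stretch (e1 ++ e2) (w1 ++ w2) = stretch e1 w1 ++ stretch e2 w2.
Proof. by move=> w1e1; rewrite /stretch zip_cat // map_cat flatten_cat. Qed.

Lemma map_stretch S (f : T -> S) e w : map f (stretch e w) = stretch e (map f w).
Proof.
elim: w e => [|x w IH] [|c e] //.
by rewrite !stretch_cons map_cat map_nseq IH.
Qed.

Lemma all_stretch (a : pred T) e w : all a w -> all a (stretch e w).
Proof.
elim: w e => [|x w IH] [|c e] // /andP[ax aw].
by rewrite stretch_cons all_cat all_nseq ax orbT IH.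
Qed.

Lemma sorted_stretch (leT : rel T) e w : reflexive leT -> transitive leT ->
  sorted leT w -> sorted leT (stretch e w).
Proof.
move=> leT_refl leT_tr; rewrite !sorted_pairwise //.
elim: w e => [|x w IH] [|c e] // /andP[xw /IH leTw].
rewrite stretch_cons pairwise_cat leTw andbT; apply/andP; split.
  by rewrite /allrel all_nseq /=; apply: all_stretch.
by elim: c => //= c ->; rewrite all_nseq leT_refl orbT.
Qed.

End Stretch.

Lemma count_stretch (T : eqType) (e : seq nat) (w : seq T) x :
  uniq w -> size e = size w ->
  count_mem x (stretch e w) = (x \in w) * (nth 0 e (index x w)).+1.
Proof.
elim: w e => [|y w IH] [|c e] // /andP[yw uw] [ew].
rewrite stretch_cons count_cat count_nseq IH // inE.
case: (eqVneq y x) => [<-|yx]; first by rewrite /= eqxx (negbTE yw) addn0.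
by rewrite /= (negbTE yx).
Qed.

Lemma up_word_stretch (r w : seq nat) : size r <= size w ->
  up_word r w = stretch (nseq (size w - size r) 0 ++ rev r) w.
Proof.
move=> rw; set m := size w - size r.
have wm : size (take m w) = m by rewrite size_takel ?leq_subr.
by rewrite -[X in stretch _ X](cat_take_drop m w) stretch_cat ?size_nseq // stretch_nseq0.
Qed.

Lemma mem_words (m : nat) (s w : seq nat) :
  (w \in words m s) = (size w == m) && all (mem s) w.
Proof.
elim: m w => [|m IH] [|x w] //=; first by apply/allpairsP => -[[a b] /= []].
apply/allpairsP/idP => [[[a b] /= [aS bW [-> ->]]] | /and3P[wm xs ws]].
  by rewrite eqSS aS -IH.
by exists (x, w); rewrite IH -eqSS wm ws.
Qed.

Lemma uniq_words (m : nat) (s : seq nat) : uniq s -> uniq (words m s).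
Proof.
move=> s_uniq; elim: m => //= m IH.
by apply: allpairs_uniq => // -[a b] [c d] _ _ /= [-> ->].
Qed.

Definition separates (E : pluriedge) (w : seq nat) : bool :=
  has (fun uv => nth 0 w uv.1 != nth 0 w uv.2) E.

Lemma proper_coloring_rem (pe : plurigraph) (E : pluriedge) (w : seq nat) :
  E \in pe -> proper_coloring pe w = separates E w && proper_coloring (rem E pe) w.
Proof. by move=> E_pe; rewrite /proper_coloring (perm_all _ (perm_to_rem E_pe)). Qed.

Lemma Ychrom_rem (K : fieldType) n pe (E : pluriedge) (w : seq nat) : E \in pe ->
  Ychrom K n pe w = ((separates E w)%:R * Ychrom K n (rem E pe) w)%R.
Proof.
move=> E_pe; rewrite /Ychrom (proper_coloring_rem _ E_pe).
by case: separates; rewrite ?mul1r ?mul0r ?andbF.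
Qed.

Lemma wf_edge n pe (E : pluriedge) (uv : edge) : wf_plurigraph n pe ->
  E \in pe -> uv \in E -> uv.1 < n /\ uv.2 < n.
Proof. by move=> /allP pe_wf /pe_wf /andP[_ /allP E_wf] /E_wf /andP[]. Qed.

Lemma nth_eq_connect n (E : pluriedge) (u : seq nat) (x y : 'I_n) :
  ~~ separates E u -> connect (adjE E) x y -> nth 0 u x = nth 0 u y.
Proof.
move=> /hasPn sepN /connectP[p + ->]; elim: p x => [|z p IH] x //= /andP[xz /IH <-].
by apply/eqP; case/orP: xz => /sepN; rewrite negbK // eq_sym.
Qed.

Lemma count_iota_card n (P : pred nat) :
  count P (iota 0 n) = #|[pred x : 'I_n | P x]|.
Proof. by rewrite -val_enum_ord count_map cardE size_filter enumT. Qed.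

Lemma adjE_connect_sym n (E : pluriedge) : connect_sym (@adjE n E).
Proof. by apply: sym_connect_sym => x y; apply: orbC. Qed.

Lemma component_eq n (E : pluriedge) (x y : 'I_n) :
  x \in component E y -> component E y = component E x.
Proof.
rewrite inE => yx; apply/setP => z; rewrite !inE.
exact: (same_connect (@adjE_connect_sym n E) yx z).
Qed.

Lemma in_blockE n (x : 'I_n) (B : {set 'I_n}) : in_block x B = (x \in B).
Proof.
apply/existsP/idP => [[y /andP[yB /eqP/val_inj <-]] // | xB].
by exists x; rewrite xB eqxx.
Qed.

Section ContractionReady.

Variables (n : nat) (E : pluriedge) (Bs : seq {set 'I_n}) (k : nat).
Hypothesis crc : contraction_ready_composition E Bs k.

Local Notation blk x := (find (in_block (nat_of_ord x)) Bs).
Local Notation l := (size Bs).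

Lemma block_component X : X \in Bs -> exists x, X = component E x.
Proof. by have [_ BsP _ _ _] := crc; move/BsP. Qed.

Lemma component_block (x : 'I_n) : component E x \in Bs.
Proof. by have [_ BsP _ _ _] := crc; apply/BsP; exists x. Qed.

Lemma block_nonempty X : X \in Bs -> exists x, x \in X.
Proof. by case/block_component=> x ->; exists x; rewrite inE connect0. Qed.

Lemma has_blk (x : 'I_n) : has (in_block x) Bs.
Proof.
by apply/hasP; exists (component E x); rewrite ?component_block // in_blockE inE connect0.
Qed.

Lemma blk_lt (x : 'I_n) : blk x < l.
Proof. by rewrite -has_find has_blk. Qed.

Lemma nth_blk (x : 'I_n) : nth set0 Bs (blk x) = component E x.
Proof.
have /block_component [y Bx] := mem_nth set0 (blk_lt x).
by rewrite Bx; apply: component_eq; rewrite -Bx -in_blockE; apply: nth_find (has_blk x).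
Qed.

Lemma mem_nth_blk (x : 'I_n) i : i < l -> (x \in nth set0 Bs i) = (blk x == i).
Proof.
move=> il; apply/idP/eqP => [xBi | <-]; last by rewrite nth_blk inE connect0.
have [uBs _ _ _ _] := crc.
apply/eqP; rewrite -(nth_uniq set0 (blk_lt x) il uBs) nth_blk eq_sym; apply/eqP.
have /block_component [y yBi] := mem_nth set0 il.
by rewrite yBi in xBi *; apply: component_eq.
Qed.

Lemma blk_eq_connect (x y : 'I_n) : (blk x == blk y) = connect (adjE E) x y.
Proof. by rewrite eq_sym -mem_nth_blk ?blk_lt // nth_blk inE. Qed.

Lemma phi_lt (x : 'I_n) : phi Bs x < l.
Proof. by have := blk_lt x; rewrite /phi; lia. Qed.

Lemma phi_eq_connect (x y : 'I_n) : (phi Bs x == phi Bs y) = connect (adjE E) x y.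
Proof.
rewrite -blk_eq_connect /phi; have := blk_lt x; have := blk_lt y.
by move=> *; apply/eqP/eqP; lia.
Qed.

Lemma phi_eqE (x : 'I_n) j : j < l -> (phi Bs x == j) = (x \in nth set0 Bs (l.-1 - j)).
Proof.
move=> jl; rewrite mem_nth_blk /phi; last by lia.
by have := blk_lt x; rewrite -!subn1; lia.
Qed.

Lemma phi_homo v w : v <= w -> w < n -> phi Bs v <= phi Bs w.
Proof.
move=> vw wn; have vn := leq_ltn_trans vw wn.
have [_ _ Bs_dec _ _] := crc.
rewrite /phi leq_sub2l // leqNgt; apply/negP => lt_blk.
have := Bs_dec _ _ lt_blk (blk_lt (Ordinal wn)) (Ordinal vn) (Ordinal wn).
rewrite !mem_nth_blk; [|exact: blk_lt (Ordinal wn)|exact: blk_lt (Ordinal vn)].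
by move=> /(_ (eqxx _) (eqxx _)) /=; lia.
Qed.

Lemma rev_block_nonempty j : j < l -> exists x, x \in nth set0 Bs (l.-1 - j).
Proof.
move=> jl; apply/block_nonempty/mem_nth.
by rewrite (leq_ltn_trans (leq_subr _ _)) // ltn_predL (leq_ltn_trans (leq0n j) jl).
Qed.

Local Notation r := [seq #|nth set0 Bs i| - 1 | i <- iota 0 k].

Lemma excess_blocks : [seq #|B| - 1 | B : {set 'I_n} <- Bs] = r ++ nseq (l - k) 0.
Proof.
have [_ _ _ kl Bs_single] := crc.
rewrite -[in LHS](mkseq_nth set0 Bs) /mkseq -map_comp.
have -> : iota 0 l = iota 0 k ++ iota k (l - k) by rewrite -iotaD subnKC.
rewrite map_cat; congr (_ ++ _).
have /all_pred1P -> : all (pred1 0) [seq #|nth set0 Bs i| - 1 | i <- iota k (l - k)].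
  apply/allP => _ /mapP[i + ->]; rewrite mem_iota subnKC // => /andP[ki il].
  by have := Bs_single i il; rewrite ki => /eqP ->.
by rewrite size_map size_iota.
Qed.

Lemma count_phi j : j < l ->
  count_mem j [seq phi Bs v | v <- iota 0 n] = #|nth set0 Bs (l.-1 - j)|.
Proof.
move=> jl; rewrite count_map count_iota_card; apply: eq_card => x.
by rewrite inE /= phi_eqE.
Qed.

(* [phi] is weakly increasing, so the word of its values is determined by how
   often each value occurs. *)
Lemma phi_iota_stretch :
  [seq phi Bs v | v <- iota 0 n] =
  stretch (rev [seq #|B| - 1 | B : {set 'I_n} <- Bs]) (iota 0 l).
Proof.
apply: (sorted_eq leq_trans anti_leq).
- apply: (@homo_sorted_in _ _ [pred v | v < n]); last exact: iota_sorted.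
    by move=> v w _ wn vw; apply: phi_homo.
  by apply/allP => v; rewrite mem_iota.
- exact: sorted_stretch leqnn leq_trans (iota_sorted 0 l).
apply/allP => j _; apply/eqP.
rewrite count_stretch ?iota_uniq ?size_rev ?size_map ?size_iota // mem_iota /=.
case: ltnP => [jl | lj]; last first.
  apply/eqP; rewrite -leqn0 leqNgt -has_count; apply/hasPn => _ /mapP[v + ->].
  by rewrite mem_iota /= => vn; rewrite neq_ltn (leq_trans (phi_lt (Ordinal vn)) lj).
have ij : index j (iota 0 l) = j.
  have jI : j \in iota 0 l by rewrite mem_iota.
  have il : index j (iota 0 l) < l by rewrite -{2}(size_iota 0 l) index_mem.
  by have := nth_index 0 jI; rewrite nth_iota //; lia.
have [x xBj] := rev_block_nonempty jl.
rewrite ij nth_rev ?size_map // subnS predn_sub (nth_map set0); last by lia.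
by rewrite count_phi // mul1n subn1 prednK //; apply/card_gt0P; exists x.
Qed.

Definition pullback (g : seq nat) : seq nat := [seq nth 0 g (phi Bs v) | v <- iota 0 n].

Lemma up_word_pullback g : size g = l -> up_word r g = pullback g.
Proof.
move=> gl; have [_ _ _ kl _] := crc.
rewrite up_word_stretch; last by rewrite size_map size_iota gl.
rewrite size_map size_iota gl -rev_nseq -rev_cat -excess_blocks.
rewrite /pullback (map_comp (nth 0 g) (phi Bs)) phi_iota_stretch map_stretch.
by rewrite -{1}(mkseq_nth 0 g) gl.
Qed.

Lemma phi_onto j : j < l -> j \in [seq phi Bs v | v <- iota 0 n].
Proof.
move=> jl; have [x xBj] := rev_block_nonempty jl.
apply/mapP; exists (val x); first by rewrite mem_iota ltn_ord.
by apply/esym/eqP; rewrite phi_eqE.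
Qed.

Lemma pullback_inj g1 g2 :
  size g1 = l -> size g2 = l -> pullback g1 = pullback g2 -> g1 = g2.
Proof.
move=> g1l g2l g12; apply: (@eq_from_nth _ 0); first by rewrite g1l g2l.
move=> j; rewrite g1l => /phi_onto /mapP[v]; rewrite mem_iota => /andP[_ vn] ->.
by have := congr1 (nth 0 ^~ v) g12; rewrite /pullback !(nth_map 0) ?size_iota // nth_iota.
Qed.

Lemma all_pullback (a : pred nat) g : size g = l -> all a (pullback g) = all a g.
Proof.
move=> gl; apply/allP/allP => [a_pg _ /(nthP 0) [j jg <-] | a_g _ /mapP[v + ->]].
  rewrite gl in jg; have /mapP[v vn phi_v] := phi_onto jg.
  by apply: a_pg; rewrite phi_v; apply: map_f.
rewrite mem_iota => /andP[_ vn].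
by apply/a_g/mem_nth; rewrite gl (phi_lt (Ordinal vn)).
Qed.

Lemma pullback_onto u : size u = n -> ~~ separates E u ->
  exists2 g, g \in words l (undup u) & pullback g = u.
Proof.
move=> un sepN; set phis := [seq phi Bs v | v <- iota 0 n].
have phis_n : size phis = n by rewrite size_map size_iota.
exists [seq nth 0 u (index j phis) | j <- iota 0 l].
  rewrite mem_words size_map size_iota eqxx /=.
  apply/allP => _ /mapP[j + ->]; rewrite mem_iota => /phi_onto jphis.
  by rewrite /= mem_undup mem_nth // un -phis_n index_mem.
apply: (@eq_from_nth _ 0); rewrite size_map size_iota ?un // => v vn.
have pv := phi_lt (Ordinal vn).
rewrite /pullback !(nth_map 0) ?size_iota // !nth_iota //.
set w := index _ phis; have phis_w : phi Bs v \in phis by apply: map_f; rewrite mem_iota.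
have wn : w < n by rewrite -phis_n index_mem.
apply: (@nth_eq_connect n E u (Ordinal wn) (Ordinal vn) sepN); rewrite -phi_eq_connect /=.
by have := nth_index 0 phis_w; rewrite (nth_map 0) ?size_iota // nth_iota // add0n => ->.
Qed.

Section Contraction.

Variable pe : plurigraph.
Hypotheses (pe_wf : wf_plurigraph n pe) (E_pe : E \in pe).

Lemma pullback_nonseparating g : ~~ separates E (pullback g).
Proof.
apply/hasPn => -[a b] ab /=; have [an bn] := wf_edge pe_wf E_pe ab.
rewrite negbK /pullback !(nth_map 0) ?size_iota // !nth_iota //=.
apply/eqP; congr nth; apply/eqP.
by rewrite (phi_eq_connect (Ordinal an) (Ordinal bn)); apply: connect1; rewrite /adjE /= ab.
Qed.

Lemma proper_coloring_contract g :
  proper_coloring (contract pe E Bs) g = proper_coloring (rem E pe) (pullback g).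
Proof.
rewrite /proper_coloring /contract all_map; apply: eq_in_all => E' /mem_rem E'pe /=.
rewrite has_map; apply: eq_in_has => -[a b] ab /=; have [an bn] := wf_edge pe_wf E'pe ab.
by rewrite /pullback !(nth_map 0) ?size_iota // !nth_iota.
Qed.

Lemma Ychrom_contract (K : fieldType) g : size g = l ->
  Ychrom K l (contract pe E Bs) g = Ychrom K n (rem E pe) (pullback g).
Proof.
move=> gl; rewrite /Ychrom proper_coloring_contract all_pullback // gl.
by rewrite size_map size_iota !eqxx.
Qed.

Lemma up_series_pullback (K : fieldType) (F : seq nat -> K) u :
  up_series l r F u = (\sum_(w <- words l (undup u) | pullback w == u) F w)%R.
Proof.
rewrite /up_series [LHS]big_seq_cond [RHS]big_seq_cond; apply: eq_bigl => w.
case wW: (w \in _) => //=; move: wW; rewrite mem_words => /andP[/eqP wl _].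
by rewrite up_word_pullback.
Qed.

Lemma up_series_contract (K : fieldType) u :
  up_series l r (Ychrom K l (contract pe E Bs)) u =
  ((~~ separates E u)%:R * Ychrom K n (rem E pe) u)%R.
Proof.
rewrite up_series_pullback.
case: (boolP ((size u == n) && ~~ separates E u)) => [/andP[/eqP un sepN] | uN].
  have [g gW gu] := pullback_onto un sepN.
  have gl : size g = l by move: gW; rewrite mem_words => /andP[/eqP].
  rewrite -big_filter.
  have -> : [seq w <- words l (undup u) | pullback w == u] = [:: g].
    rewrite -(filter_pred1_uniq (uniq_words _ (undup_uniq _)) gW).
    apply: eq_in_filter => w; rewrite mem_words => /andP[/eqP wl _].
    by rewrite -gu; apply/eqP/eqP => [/(pullback_inj wl gl) | ->].
  by rewrite big_seq1 sepN mul1r Ychrom_contract // gu.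
rewrite big1 => [|w /eqP wu]; last first.
  by move: uN; rewrite -wu size_map size_iota pullback_nonseparating eqxx.
move: uN; rewrite /Ychrom; case: (size u == n); case: (separates E u) => //= _.
all: by rewrite ?mul0r ?mulr0.
Qed.

End Contraction.

End ContractionReady.

Local Open Scope ring_scope.

Theorem theorem2p4 (K : fieldType) (Kchar0 : [pchar K] =i pred0)
    (n : nat) (pe : plurigraph) (E : pluriedge)
    (Bs : seq {set 'I_n}) (k : nat) :
  wf_plurigraph n pe ->
  E \in pe ->
  contraction_ready_composition E Bs k ->
  let r := [seq (#|nth set0 Bs i| - 1)%N | i <- iota 0 k] in
  forall u : seq nat,
    Ychrom K n pe u =
    Ychrom K n (delete pe E) u
    - up_series (size Bs) r (Ychrom K (size Bs) (contract pe E Bs)) u.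
Proof.
move=> pe_wf E_pe crc r u.
rewrite /delete (Ychrom_rem _ _ _ E_pe) (up_series_contract crc pe_wf E_pe).
by case: separates; rewrite ?mul1r ?mul0r ?subr0 ?subrr.
Qed.
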